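(* Let $u\in H\setminus\{0\}$, let $\tau_u>0$ be the unique positive number with $\tau_u u\in\mathcal{N}_\infty$ and $t_u>0$ the unique positive number with $t_u u\in\mathcal{N}$. Then $\tau_u\le t_u$.
   Context: Let $V,K:\mathbb{R}^3\to\mathbb{R}$ be measurable with: $V(x)\to V_\infty\ge 0$ as $|x|\to\infty$, $V(x)\ge V_\infty$ for all $x$, $V-V_\infty\in L^{3/2}(\mathbb{R}^3)$; $K(x)\to0$ as $|x|\to\infty$, $K\ge0$, $K\not\equiv0$, $K\in L^2(\mathbb{R}^3)$. $H=H^1(\mathbb{R}^3)$ if $V_\infty>0$ and $H=\mathcal{D}^{1,2}(\mathbb{R}^3)$ (completion of $C_0^\infty$ under $(\int|\nabla u|^2)^{1/2}$) if $V_\infty=0$. For $u\in H$, $\phi_u\in\mathcal{D}^{1,2}(\mathbb{R}^3)$ is the unique solution of $-\Delta\phi=K(x)u^2$, i.e. $\phi_u(x)=\frac1{4\pi}\int_{\mathbb{R}^3}\frac{K(y)u^2(y)}{|x-y|}dy$. $I(u)=\frac12\int(|\nabla u|^2+V(x)u^2)dx+\frac14\int K\phi_u u^2dx-\frac16\int u^6dx$, $\mathcal{N}=\{u\in H\setminus\{0\}:I'(u)[u]=0\}$. $I_\infty(u)=\frac12\int|\nabla u|^2dx-\frac16\int u^6dx$, $\mathcal{N}_\infty=\{u\in H\setminus\{0\}:I_\infty'(u)[u]=0\}$. For each $u\ne0$ there are unique $t_u,\tau_u>0$ with $t_uu\in\mathcal{N}$, $\tau_uu\in\mathcal{N}_\infty$.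 *)

From HB Require Import structures.
From mathcomp Require Import all_boot all_order all_algebra.
From mathcomp Require Import all_classical all_reals all_analysis.
Set Implicit Arguments. Unset Strict Implicit. Unset Printing Implicit Defensive.
Import Order.TTheory GRing.Theory Num.Theory.
Import numFieldNormedType.Exports.
Local Open Scope classical_set_scope.
Local Open Scope ring_scope.

Section R3.
Variable R : realType.

Definition pt := ((R * R) * R)%type.

Definition leb3 := ((@lebesgue_measure R \x @lebesgue_measure R) \x @lebesgue_measure R)%E.

Definition coord (i : 'I_3) (x : pt) : R :=
  if val i == 0%N then x.1.1 else if val i == 1%N then x.1.2 else x.2.

Definition norm3 (x : pt) : R := Num.sqrt (x.1.1 ^+ 2 + x.1.2 ^+ 2 + x.2 ^+ 2).
Definition dist3 (x y : pt) : R :=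
  norm3 ((x.1.1 - y.1.1, x.1.2 - y.1.2), x.2 - y.2).

Definition evec (i : 'I_3) : pt :=
  ((if val i == 0%N then 1 else 0, if val i == 1%N then 1 else 0),
   if val i == 2%N then 1 else 0).

Definition pderiv (i : 'I_3) (f : pt -> R) : pt -> R := fun x => 'D_(evec i) f x.

Definition smooth3 (f : pt -> R) : Prop :=
  forall s : seq 'I_3, let g := foldr pderiv f s in
    continuous g /\ forall (i : 'I_3) (x : pt), derivable g x (evec i).

Definition compact_support3 (f : pt -> R) : Prop :=
  exists r : R, forall x, r < norm3 x -> f x = 0.

Definition test_fun (f : pt -> R) : Prop := smooth3 f /\ compact_support3 f.

Definition inLp (p : R) (f : pt -> R) : Prop :=
  measurable_fun setT f /\
  leb3.-integrable setT (fun x => ((`|f x|) `^ p)%:E).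

Definition weak_grad (u : pt -> R) (g : 'I_3 -> pt -> R) : Prop :=
  forall (i : 'I_3) (phi : pt -> R), test_fun phi ->
    leb3.-integrable setT (fun x => (u x * pderiv i phi x)%:E) /\
    leb3.-integrable setT (fun x => (g i x * phi x)%:E) /\
    Rintegral leb3 setT (fun x => u x * pderiv i phi x)
    = - Rintegral leb3 setT (fun x => g i x * phi x).

(* membership in H, with g the weak gradient of u:
   D^{1,2}(R^3) = {u in L^6 : grad u in L^2}        (Vinf = 0),
   H^1(R^3)     = {u in L^2 : grad u in L^2} (Vinf > 0), which is contained in L^6
   by the Sobolev embedding, so the L^6 clause is redundant in that case. *)
Definition inH (Vinf : R) (u : pt -> R) (g : 'I_3 -> pt -> R) : Prop :=
  [/\ weak_grad u g, (forall i, inLp 2 (g i)), inLp 6 u & (0 < Vinf -> inLp 2 u)].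

Definition nonzero (u : pt -> R) : Prop := ~ leb3.-negligible [set x | u x != 0].

Definition gradsq (g : 'I_3 -> pt -> R) (x : pt) : R := \sum_(i < 3) g i x ^+ 2.

Definition phi (K u : pt -> R) (x : pt) : R :=
  (4 * pi)^-1 * Rintegral leb3 setT (fun y => K y * u y ^+ 2 / dist3 x y).

Definition Ifun (V K : pt -> R) (u : pt -> R) (g : 'I_3 -> pt -> R) : R :=
  2^-1 * Rintegral leb3 setT (fun x => gradsq g x + V x * u x ^+ 2)
  + 4^-1 * Rintegral leb3 setT (fun x => K x * phi K u x * u x ^+ 2)
  - 6^-1 * Rintegral leb3 setT (fun x => u x ^+ 6).

Definition Iinf (u : pt -> R) (g : 'I_3 -> pt -> R) : R :=
  2^-1 * Rintegral leb3 setT (gradsq g)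
  - 6^-1 * Rintegral leb3 setT (fun x => u x ^+ 6).

Definition sc (s : R) (u : pt -> R) : pt -> R := fun x => s * u x.
Definition scg (s : R) (g : 'I_3 -> pt -> R) : 'I_3 -> pt -> R := fun i x => s * g i x.

(* J'(u)[u] computed as the derivative at s = 0 of s |-> J(u + s u) *)
Definition dir_self (J : (pt -> R) -> ('I_3 -> pt -> R) -> R)
  (u : pt -> R) (g : 'I_3 -> pt -> R) : R -> R :=
  fun s => J (sc (1 + s) u) (scg (1 + s) g).

Definition inNehari (Vinf : R) (V K : pt -> R) (u : pt -> R) (g : 'I_3 -> pt -> R) : Prop :=
  inH Vinf u g /\ nonzero u /\
  derivable (dir_self (Ifun V K) u g) 0 1 /\ 'D_1 (dir_self (Ifun V K) u g) 0 = 0.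

Definition inNehari_inf (Vinf : R) (u : pt -> R) (g : 'I_3 -> pt -> R) : Prop :=
  inH Vinf u g /\ nonzero u /\
  derivable (dir_self Iinf u g) 0 1 /\ 'D_1 (dir_self Iinf u g) 0 = 0.

End R3.

(* Along the ray s |-> s u both functionals are polynomials in s:
     I_oo(s u) = s^2 A / 2 - s^6 D / 6,   I(s u) = s^2 E / 2 + s^4 C / 4 - s^6 D / 6,
   with A = int |grad u|^2, E = int (|grad u|^2 + V u^2), C = int K phi_u u^2 and
   D = int u^6.  The Nehari conditions at tau and t read tau^4 D = A and
   t^4 D = E + t^2 C; since D > 0, C >= 0 and A <= E, this forces tau <= t.
   As [Rintegral] is 0 on non-integrable functions, A <= E needs V u^2 to be
   integrable, which follows from Young's inequality
   (V - V_oo) u^2 <= (V - V_oo)^(3/2) + u^6. *)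

From HB Require Import structures.
From mathcomp Require Import all_boot all_order all_algebra.
From mathcomp Require Import all_classical all_reals all_analysis.
From mathcomp Require Import ring measurable_realfun.
Import Order.TTheory GRing.Theory Num.Theory.
Import numFieldNormedType.Exports.
Local Open Scope classical_set_scope.
Local Open Scope ring_scope.
Import HBNNSimple.

Section nonneg_integral_scaling.
Context {d : measure_display} {T : measurableType d} {R : realType}.
Variable mu : {measure set T -> \bar R}.

(* Unlike [ge0_integralZl_EFin], no measurability is assumed: the integral of a
   nonnegative function is the supremum over its simple minorants, and scaling
   by [c > 0] is a bijection on those. *)
Lemma ge0_integralTZl_le (f : T -> R) (c : R) : 0 < c -> (forall x, 0 <= f x) ->
  (\int[mu]_x (c * f x)%:E <= c%:E * \int[mu]_x (f x)%:E)%E.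
Proof.
move=> c_gt0 f_ge0.
rewrite ge0_integralTE; last by move=> x; rewrite lee_fin mulr_ge0 // ltW.
rewrite ge0_integralTE //.
apply: ge_ereal_sup => _ [h h_le <-].
have cV_ge0 : 0 <= c^-1 by rewrite invr_ge0 ltW.
pose h' := scale_nnsfun h cV_ge0.
have -> : sintegral mu h = (c%:E * sintegral mu h')%E.
  rewrite -sintegralrM; apply: eq_sintegral => x /=.
  by rewrite mulrA mulfV ?gt_eqF // mul1r.
rewrite lee_pmul2l ?lte_fin //; apply: ereal_sup_ubound; exists h' => // x /=.
by rewrite lee_fin ler_pdivrMl // -lee_fin.
Qed.

Lemma ge0_integralTZl (f : T -> R) (c : R) : 0 < c -> (forall x, 0 <= f x) ->
  (\int[mu]_x (c * f x)%:E = c%:E * \int[mu]_x (f x)%:E)%E.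
Proof.
move=> c_gt0 f_ge0; apply/eqP; rewrite eq_le ge0_integralTZl_le //=.
have cV_gt0 : 0 < c^-1 by rewrite invr_gt0.
rewrite -lee_pdivlMl //.
have -> : (\int[mu]_x (f x)%:E = \int[mu]_x (c^-1 * (c * f x))%:E)%E.
  by apply: eq_integral => x _; rewrite mulKf ?lt0r_neq0.
by apply: ge0_integralTZl_le => // x; rewrite mulr_ge0 // ltW.
Qed.

Lemma ge0_RintegralTZl (f : T -> R) (c : R) : 0 <= c -> (forall x, 0 <= f x) ->
  \int[mu]_x (c * f x) = c * \int[mu]_x f x.
Proof.
rewrite le_eqVlt => /predU1P[<- _|c_gt0 f_ge0].
  rewrite mul0r; under eq_Rintegral do rewrite mul0r.
  by rewrite /Rintegral integral0.
rewrite /Rintegral ge0_integralTZl //.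
case: (\int[mu]_x (f x)%:E)%E => [r||] //=.
- by rewrite mulry gtr0_sg // mul1e /= mulr0.
- by rewrite mulrNy gtr0_sg // mul1e /= mulr0.
Qed.

Lemma eq_ge0_RintegralTZl {f h : T -> R} {c : R} : (forall x, h x = c * f x) ->
  (forall x, 0 <= f x) -> 0 <= c -> \int[mu]_x h x = c * \int[mu]_x f x.
Proof.
by move=> hE f_ge0 c_ge0; rewrite -ge0_RintegralTZl //; exact: eq_Rintegral.
Qed.

Lemma RintegralT_gt0 {f : T -> R} : mu.-integrable setT (fun x => (f x)%:E) ->
  (forall x, 0 <= f x) -> ~ mu.-negligible [set x | f x != 0] ->
  0 < \int[mu]_x f x.
Proof.
move=> f_int f_ge0 f_nz; rewrite lt_neqAle Rintegral_ge0 // andbT.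
apply: contra_notN f_nz => /eqP f_eq0.
have abs_eq0 : (\int[mu]_x `|(f x)%:E| = 0)%E.
  under eq_integral do rewrite gee0_abs ?lee_fin //.
  rewrite -(fineK (integrable_fin_num measurableT f_int)).
  exact: (congr1 EFin (esym f_eq0)).
have := (ae_eq_integral_abs mu measurableT (measurable_int _ f_int)).1 abs_eq0.
by apply: negligibleS => x /= fx_neq0 /(_ I) /eqP; rewrite eqe (negPf fx_neq0).
Qed.

End nonneg_integral_scaling.

Lemma young_powR32_exp3 (R : realType) (a b : R) : 0 <= a -> 0 <= b ->
  a * b <= a `^ (3 / 2) + b ^+ 3.
Proof.
move=> a_ge0 b_ge0.
have [a_le|b2_lt] := lerP a (b ^+ 2).
  apply: le_trans (_ : _ <= b ^+ 3) _; last by rewrite lerDr powR_ge0.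
  by rewrite exprSr ler_wpM2r.
have a_gt0 : 0 < a by apply: le_lt_trans b2_lt; rewrite sqr_ge0.
have b_lt : b < Num.sqrt a by rewrite -[b]ger0_norm // -sqrtr_sqr ltr_sqrt.
apply: le_trans (_ : _ <= a `^ (3 / 2)) _; last by rewrite lerDl exprn_ge0.
rewrite (_ : 3 / 2 = 1 + 2^-1); last by field.
rewrite powRD ?lt0r_neq0 ?implybT // powRr1 // powR12_sqrt //.
by rewrite ler_wpM2l // ltW.
Qed.

Lemma Nehari_scaling_le {R : realFieldType} {A E C D tau t : R} :
  0 < tau -> 0 < t -> 0 < D -> 0 <= C -> A <= E ->
  tau ^+ 2 * A - tau ^+ 6 * D = 0 -> t ^+ 2 * E + t ^+ 4 * C - t ^+ 6 * D = 0 ->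
  tau <= t.
Proof.
move=> tau_gt0 t_gt0 D_gt0 C_ge0 A_le_E tau_eq t_eq.
have /eqP : tau ^+ 2 * (A - tau ^+ 4 * D) = 0 by rewrite -tau_eq; ring.
rewrite mulf_eq0 expf_eq0 /= gt_eqF //= subr_eq0 => /eqP A_eq.
have /eqP : t ^+ 2 * (E + t ^+ 2 * C - t ^+ 4 * D) = 0 by rewrite -t_eq; ring.
rewrite mulf_eq0 expf_eq0 /= gt_eqF //= subr_eq0 => /eqP E_eq.
have : tau ^+ 4 * D <= t ^+ 4 * D.
  by rewrite -A_eq -E_eq (le_trans A_le_E) // lerDl mulr_ge0 ?sqr_ge0.
by rewrite ler_pM2r // ler_pXn2r // nnegrE ltW.
Qed.

Section Nehari_scaling.
Variable R : realType.
Local Notation leb := (@leb3 R).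
Implicit Types (V K u : pt R -> R) (g : 'I_3 -> pt R -> R).

Lemma inLp_integrable_exprn {n : nat} {f : pt R -> R} : inLp n%:R f -> ~~ odd n ->
  leb.-integrable setT (fun x => (f x ^+ n)%:E).
Proof.
case=> _ + n_even; apply: eq_integrable => // x _.
by rewrite powR_mulrn // -normrX ger0_norm // exprn_even_ge0.
Qed.

Lemma gradsq_ge0 g x : 0 <= gradsq g x.
Proof. by apply: sumr_ge0 => i _; exact: sqr_ge0. Qed.

Lemma gradsq_scg (s : R) g x : gradsq (scg s g) x = s ^+ 2 * gradsq g x.
Proof. by rewrite /gradsq mulr_sumr; apply: eq_bigr => i _; rewrite exprMn. Qed.

Lemma integrable_gradsq g : (forall i, inLp 2 (g i)) ->
  leb.-integrable setT (EFin \o gradsq g).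
Proof.
move=> g_L2.
have := @integrable_sum _ _ _ leb setT measurableT _ (index_enum 'I_3) xpredT
  (fun i x => (g i x ^+ 2)%:E) (fun i _ => inLp_integrable_exprn (g_L2 i) isT).
by apply: eq_integrable => // x _; rewrite /= sumEFin.
Qed.

Lemma integrable_V_sqr (Vinf : R) V u : 0 <= Vinf -> (forall x, Vinf <= V x) ->
  measurable_fun setT V -> inLp (3 / 2) (fun x => V x - Vinf) -> inLp 6 u ->
  (0 < Vinf -> inLp 2 u) -> leb.-integrable setT (fun x => (V x * u x ^+ 2)%:E).
Proof.
move=> Vinf_ge0 V_ge mV [_ V_L32] u_L6 u_L2.
have int_Vinf : leb.-integrable setT (fun x => (Vinf * u x ^+ 2)%:E).
  have [->|Vinf_neq0] := eqVneq Vinf 0.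
    by apply: eq_integrable (integrable0 _ setT) => // x _; rewrite mul0r.
  have Vinf_gt0 : 0 < Vinf by rewrite lt_neqAle eq_sym Vinf_neq0.
  have u2_int := inLp_integrable_exprn (u_L2 Vinf_gt0) isT.
  by apply: eq_integrable (integrableZl measurableT Vinf u2_int) => // x _.
have int_diff : leb.-integrable setT (fun x => ((V x - Vinf) * u x ^+ 2)%:E).
  have u6_int := inLp_integrable_exprn u_L6 isT.
  apply: le_integrable (integrableD measurableT V_L32 u6_int) => //.
    apply/measurable_EFinP; apply: measurable_funM; first exact: measurable_funB.
    exact: measurable_funX (proj1 u_L6).
  move=> x _ /=; have dV_ge0 : 0 <= V x - Vinf by rewrite subr_ge0.
  have lhs_ge0 := mulr_ge0 dV_ge0 (sqr_ge0 (u x)).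
  have rhs_ge0 : 0 <= `|V x - Vinf| `^ (3 / 2) + u x ^+ 6.
    by rewrite addr_ge0 ?powR_ge0 ?exprn_even_ge0.
  rewrite lee_fin [`|_ + _|]ger0_norm // !ger0_norm //.
  by rewrite (exprM _ 2 3) young_powR32_exp3 ?sqr_ge0.
apply: eq_integrable (integrableD measurableT int_diff int_Vinf) => // x _.
by rewrite /= -EFinD mulrBl subrK.
Qed.

Lemma Rintegral_exprn6_gt0 u : inLp 6 u -> nonzero u -> 0 < \int[leb]_x u x ^+ 6.
Proof.
move=> u_L6 u_nz; apply: (RintegralT_gt0 _ (inLp_integrable_exprn u_L6 isT)).
  by move=> x; exact: exprn_even_ge0.
by under eq_set do rewrite expf_eq0.
Qed.

Lemma sc_comp (a b : R) u : sc a (sc b u) = sc (a * b) u.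
Proof. by apply/funext => x; rewrite /sc mulrA. Qed.

Lemma scg_comp (a b : R) g : scg a (scg b g) = scg (a * b) g.
Proof. by apply/funext => i; apply/funext => x; rewrite /scg mulrA. Qed.

Lemma phi_ge0 K u x : (forall y, 0 <= K y) -> 0 <= phi K u x.
Proof.
move=> K_ge0; rewrite /phi mulr_ge0 ?invr_ge0 ?mulr_ge0 ?pi_ge0 //.
apply: Rintegral_ge0 => y _.
exact: divr_ge0 (mulr_ge0 (K_ge0 y) (sqr_ge0 _)) (sqrtr_ge0 _).
Qed.

Lemma phi_sc K (s : R) u x : (forall y, 0 <= K y) ->
  phi K (sc s u) x = s ^+ 2 * phi K u x.
Proof.
move=> K_ge0; rewrite /phi mulrCA; congr (_ * _).
rewrite -(ge0_RintegralTZl leb) ?sqr_ge0 //; last first.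
  by move=> y; exact: divr_ge0 (mulr_ge0 (K_ge0 y) (sqr_ge0 _)) (sqrtr_ge0 _).
by apply: eq_Rintegral => y _; rewrite /sc exprMn; ring.
Qed.

Lemma Rintegral_gradsq_scg (s : R) g :
  \int[leb]_x gradsq (scg s g) x = s ^+ 2 * \int[leb]_x gradsq g x.
Proof.
apply: eq_ge0_RintegralTZl; [exact: gradsq_scg | exact: gradsq_ge0 | exact: sqr_ge0].
Qed.

Lemma Rintegral_sc_exprn6 (s : R) u :
  \int[leb]_x sc s u x ^+ 6 = s ^+ 6 * \int[leb]_x u x ^+ 6.
Proof.
apply: eq_ge0_RintegralTZl; last exact: exprn_even_ge0.
- by move=> x; rewrite /sc exprMn.
- by move=> x; exact: exprn_even_ge0.
Qed.

Lemma Rintegral_energy_sc V (s : R) u g : (forall x, 0 <= V x) ->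
  \int[leb]_x (gradsq (scg s g) x + V x * sc s u x ^+ 2)
  = s ^+ 2 * \int[leb]_x (gradsq g x + V x * u x ^+ 2).
Proof.
move=> V_ge0; apply: eq_ge0_RintegralTZl; last exact: sqr_ge0.
- by move=> x; rewrite gradsq_scg /sc; ring.
- by move=> x; rewrite addr_ge0 ?gradsq_ge0 // mulr_ge0 ?sqr_ge0.
Qed.

Lemma Rintegral_coulomb_sc K (s : R) u : (forall x, 0 <= K x) ->
  \int[leb]_x (K x * phi K (sc s u) x * sc s u x ^+ 2)
  = s ^+ 4 * \int[leb]_x (K x * phi K u x * u x ^+ 2).
Proof.
move=> K_ge0; apply: eq_ge0_RintegralTZl; last exact: exprn_even_ge0.
- by move=> x; rewrite phi_sc // /sc; ring.
- by move=> x; rewrite mulr_ge0 ?sqr_ge0 // mulr_ge0 ?phi_ge0.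
Qed.

Lemma Iinf_sc (s : R) u g : Iinf (sc s u) (scg s g) =
  2^-1 * s ^+ 2 * \int[leb]_x gradsq g x - 6^-1 * s ^+ 6 * \int[leb]_x u x ^+ 6.
Proof. by rewrite /Iinf Rintegral_gradsq_scg Rintegral_sc_exprn6 !mulrA. Qed.

Lemma Ifun_sc V K (s : R) u g : (forall x, 0 <= V x) -> (forall x, 0 <= K x) ->
  Ifun V K (sc s u) (scg s g) =
  2^-1 * s ^+ 2 * \int[leb]_x (gradsq g x + V x * u x ^+ 2)
  + 4^-1 * s ^+ 4 * \int[leb]_x (K x * phi K u x * u x ^+ 2)
  - 6^-1 * s ^+ 6 * \int[leb]_x u x ^+ 6.
Proof.
move=> V_ge0 K_ge0.
rewrite /Ifun Rintegral_energy_sc // Rintegral_coulomb_sc //.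
by rewrite Rintegral_sc_exprn6 !mulrA.
Qed.

Lemma derive_ray_poly (a b c : R) :
  'D_1 (fun s : R => a * (1 + s) ^+ 2 + b * (1 + s) ^+ 4 - c * (1 + s) ^+ 6) 0
  = 2 * a + 4 * b - 6 * c.
Proof.
rewrite derive_val !addr0 !add0r !mulr1 !scale1r -![_ *: _]/(_ * _); ring.
Qed.

Lemma derive_dir_self_Iinf (t : R) u g :
  'D_1 (dir_self (@Iinf R) (sc t u) (scg t g)) 0
  = t ^+ 2 * \int[leb]_x gradsq g x - t ^+ 6 * \int[leb]_x u x ^+ 6.
Proof.
have -> : dir_self (@Iinf R) (sc t u) (scg t g) = fun s =>
    2^-1 * t ^+ 2 * \int[leb]_x gradsq g x * (1 + s) ^+ 2 + 0 * (1 + s) ^+ 4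
    - 6^-1 * t ^+ 6 * \int[leb]_x u x ^+ 6 * (1 + s) ^+ 6.
  by apply/funext => s; rewrite /dir_self sc_comp scg_comp Iinf_sc; ring.
by rewrite derive_ray_poly; field.
Qed.

Lemma derive_dir_self_Ifun V K (t : R) u g :
  (forall x, 0 <= V x) -> (forall x, 0 <= K x) ->
  'D_1 (dir_self (Ifun V K) (sc t u) (scg t g)) 0
  = t ^+ 2 * \int[leb]_x (gradsq g x + V x * u x ^+ 2)
  + t ^+ 4 * \int[leb]_x (K x * phi K u x * u x ^+ 2)
  - t ^+ 6 * \int[leb]_x u x ^+ 6.
Proof.
move=> V_ge0 K_ge0.
have -> : dir_self (Ifun V K) (sc t u) (scg t g) = fun s =>
    2^-1 * t ^+ 2 * \int[leb]_x (gradsq g x + V x * u x ^+ 2) * (1 + s) ^+ 2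
    + 4^-1 * t ^+ 4 * \int[leb]_x (K x * phi K u x * u x ^+ 2) * (1 + s) ^+ 4
    - 6^-1 * t ^+ 6 * \int[leb]_x u x ^+ 6 * (1 + s) ^+ 6.
  by apply/funext => s; rewrite /dir_self sc_comp scg_comp Ifun_sc //; ring.
by rewrite derive_ray_poly; field.
Qed.

Lemma Rintegral_gradsq_le_energy V u g : (forall x, 0 <= V x) ->
  (forall i, inLp 2 (g i)) -> leb.-integrable setT (fun x => (V x * u x ^+ 2)%:E) ->
  \int[leb]_x gradsq g x <= \int[leb]_x (gradsq g x + V x * u x ^+ 2).
Proof.
move=> V_ge0 g_L2 Vu2_int; rewrite RintegralD //; last exact: integrable_gradsq.
by rewrite lerDl; apply: Rintegral_ge0 => x _; rewrite mulr_ge0 ?sqr_ge0.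
Qed.

End Nehari_scaling.

Theorem lemma2p7 (R : realType) (Vinf : R) (V K : pt R -> R)
  (mV : measurable_fun setT V) (mK : measurable_fun setT K)
  (V_lim : forall e : R, 0 < e -> exists r : R,
      forall x, r < norm3 x -> `|V x - Vinf| < e)
  (Vinf_ge0 : 0 <= Vinf) (V_ge : forall x, Vinf <= V x)
  (V_L32 : inLp (3 / 2) (fun x => V x - Vinf))
  (K_lim : forall e : R, 0 < e -> exists r : R,
      forall x, r < norm3 x -> `|K x| < e)
  (K_ge0 : forall x, 0 <= K x) (K_nz : nonzero K) (K_L2 : inLp 2 K)
  (u : pt R -> R) (g : 'I_3 -> pt R -> R)
  (uH : inH Vinf u g) (u_nz : nonzero u)
  (tau t : R) (tau_gt0 : 0 < tau) (t_gt0 : 0 < t)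
  (tauN : inNehari_inf Vinf (sc tau u) (scg tau g))
  (tN : inNehari Vinf V K (sc t u) (scg t g)) :
  tau <= t.
Proof.
have V_ge0 x : 0 <= V x by exact: le_trans (V_ge x).
case: uH => _ g_L2 u_L6 u_L2.
case: tauN => _ [_ [_]]; rewrite derive_dir_self_Iinf => tau_eq.
case: tN => _ [_ [_]]; rewrite derive_dir_self_Ifun // => t_eq.
apply: (Nehari_scaling_le tau_gt0 t_gt0 _ _ _ tau_eq t_eq).
- exact: Rintegral_exprn6_gt0.
- by apply: Rintegral_ge0 => x _; rewrite mulr_ge0 ?sqr_ge0 // mulr_ge0 ?phi_ge0.
- apply: Rintegral_gradsq_le_energy => //.
  exact: integrable_V_sqr Vinf_ge0 V_ge mV V_L32 u_L6 u_L2.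
Qed.
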